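(* Let $n$ and $m$ be integers with $n\ge m\ge3$, and let $M=(m_1,\dots,m_t)$ be a list of integers with $m_i\ge2$ for all $i$ and $\sum M=m$. Then there is a subgraph $G$ of $2K_n$ such that both of the following hold: - $G$ admits a decomposition into cycles of lengths $m_1,\dots,m_t$ together with one $n$-cycle; - $G$ admits a decomposition into one $m$-cycle and one $n$-cycle.
   Context: Graphs may have multiple edges but no loops. $2K_n$ is the complete multigraph on $n$ vertices with two edges joining each pair of distinct vertices. For $m\ge2$, an $m$-cycle is a cycle with $m$ edges; a $2$-cycle consists of two parallel edges. *)

From mathcomp Require Import all_boot.
Set Implicit Arguments. Unset Strict Implicit. Unset Printing Implicit Defensive.

(* A multigraph on vertex set 'I_n is given by its edge-multiplicity function
   G x y = number of edges joining x and y. *)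
Definition multigraph (n : nat) := 'I_n -> 'I_n -> nat.

Definition sub_2Kn (n : nat) (G : multigraph n) : Prop :=
  (forall x y, G x y = G y x) /\ (forall x, G x x = 0) /\
  (forall x y, G x y <= 2).

(* A cycle is given by its cyclic sequence of (distinct) vertices
   [v_0; ...; v_(k-1)], k >= 2; its edges are {v_i, v_(i+1 mod k)}.
   For k = 2 this yields two parallel edges between v_0 and v_1. *)
Definition is_cycle (n : nat) (c : seq 'I_n) : bool := uniq c && (2 <= size c).

Definition cycle_mult (n : nat) (c : seq 'I_n) (x y : 'I_n) : nat :=
  count (fun p : 'I_n * 'I_n =>
           ((p.1 == x) && (p.2 == y)) || ((p.1 == y) && (p.2 == x)))
        (zip c (rot 1 c)).

Definition decomposes_into (n : nat) (G : multigraph n) (L : seq nat) : Prop :=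
  exists cs : seq (seq 'I_n),
    all (@is_cycle n) cs /\ map size cs = L /\
    (forall x y, G x y = sumn [seq cycle_mult c x y | c <- cs]).

(** Cut the m-cycle D into consecutive blocks B_1, ..., B_t with m_i vertices
    each.  It suffices to find two Hamiltonian cycles C and C' with
    C + D = C' + B_1 + ... + B_t as edge multisets, for then G := C + D works;
    G lies in 2K_n because it is the sum of two simple cycles.  C and C' are
    built by induction on t, putting a new block s :: T in front of D:
    C becomes C ++ s :: rev T, and C' = P ++ Q, where P starts at the first
    vertex of the old first block, becomes s :: rev P ++ rev T ++ Q.  The
    edges created at the two ends of the new block then cancel in pairs. *)
From mathcomp Require Import all_boot zify.
Set Implicit Arguments. Unset Strict Implicit. Unset Printing Implicit Defensive.

Section EdgeCount.
Variables (T : eqType) (x y : T).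
Implicit Types (a b : T) (s c : seq T).

Definition is_edge a b : bool := ((a == x) && (b == y)) || ((a == y) && (b == x)).

Fixpoint path_mult a s : nat :=
  if s is b :: s' then is_edge a b + path_mult b s' else 0.

Definition cycle_count c : nat := count (fun p => is_edge p.1 p.2) (zip c (rot 1 c)).

Lemma is_edgeC a b : is_edge a b = is_edge b a.
Proof. by rewrite /is_edge orbC; congr (_ || _); apply: andbC. Qed.

Lemma path_mult_cons a b s : path_mult a (b :: s) = is_edge a b + path_mult b s.
Proof. by []. Qed.

Lemma path_mult_cat a s1 s2 :
  path_mult a (s1 ++ s2) = path_mult a s1 + path_mult (last a s1) s2.
Proof. by elim: s1 a => [|b s1 IH] a //=; rewrite IH addnA. Qed.

Lemma last_rev_cons a b s : last b (rev (a :: s)) = a.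
Proof. by rewrite rev_cons last_rcons. Qed.

Lemma path_mult_rev a s b :
  path_mult b (rev (a :: s)) = is_edge b (last a s) + path_mult a s.
Proof.
elim: s a b => [|c s IH] a b /=; first by rewrite addn0.
by rewrite rev_cons -cats1 path_mult_cat IH last_rev_cons /= addn0 (is_edgeC a c); lia.
Qed.

Lemma path_mult_notin a s : x \notin a :: s -> path_mult a s = 0.
Proof.
elim: s a => [|b s IH] a //; rewrite !inE !negb_or => /and3P[xa xb xs] /=.
by rewrite IH ?inE ?negb_or ?xb // /is_edge !(eq_sym _ x) (negbTE xa) (negbTE xb) andbF.
Qed.

Lemma cycle_count_cons a s : cycle_count (a :: s) = path_mult a s + is_edge (last a s) a.
Proof.
rewrite /cycle_count rot1_cons; move: {2 5}a => z.
by elim: s a => [|b s IH] a /=; rewrite ?IH ?addn0 ?addnA // addnC.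
Qed.

Lemma cycle_count_catC s1 s2 : cycle_count (s1 ++ s2) = cycle_count (s2 ++ s1).
Proof.
case: s1 => [|a s1]; first by rewrite cats0.
case: s2 => [|b s2]; first by rewrite cats0.
rewrite !cat_cons !cycle_count_cons !path_mult_cat !last_cat /=; lia.
Qed.

Lemma cycle_count_rot k c : cycle_count (rot k c) = cycle_count c.
Proof. by rewrite /rot cycle_count_catC cat_take_drop. Qed.

Lemma cycle_count_notin c : x \notin c -> cycle_count c = 0.
Proof.
case: c => [//|a s] xc; rewrite cycle_count_cons path_mult_notin // /is_edge.
have xl : last a s != x by apply: contra xc => /eqP <-; apply: mem_last.
have xa : a != x by apply: contra xc => /eqP <-; apply: mem_head.
by rewrite (negbTE xl) (eq_sym a) (negbTE xa) andbF.
Qed.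

Lemma cycle_count_rot_head c : uniq c -> x \in c ->
  exists s, [/\ uniq (x :: s), size s = (size c).-1
               & cycle_count c = cycle_count (x :: s)].
Proof.
move=> uc /rot_to[i s hrot]; exists s.
by rewrite -hrot rot_uniq cycle_count_rot -(size_rot i c) hrot.
Qed.

End EdgeCount.

Lemma cycle_countC (T : eqType) (x y : T) c : cycle_count x y c = cycle_count y x c.
Proof. by apply: eq_count => p; rewrite /is_edge orbC. Qed.

Lemma cycle_count_le1 (T : eqType) (x y : T) c :
  x != y -> uniq c -> 3 <= size c -> cycle_count x y c <= 1.
Proof.
move=> xy uc sc; have [xc|xc] := boolP (x \in c); last by rewrite cycle_count_notin.
have [t [us ss ->]] := cycle_count_rot_head y uc xc.
have : 2 <= size t by rewrite ss; lia.
case: t us {ss} => [|b [|b' s]] us // _.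
rewrite cycle_count_cons path_mult_cons path_mult_notin; last by case/andP: us.
have bl : b != last b' s.
  by case/and3P: us => _ + _; apply: contra => /eqP->; apply: mem_last.
rewrite /= /is_edge eqxx (negbTE xy) andbF andbT orbF /=.
case: (eqVneq b y) => [eby|_]; last by case: (_ == y).
by rewrite -eby eq_sym (negbTE bl).
Qed.

Lemma cycle_count_loop (T : eqType) (x : T) c :
  uniq c -> 2 <= size c -> cycle_count x x c = 0.
Proof.
move=> uc sc; have [xc|xc] := boolP (x \in c); last by rewrite cycle_count_notin.
have [t [us ss ->]] := cycle_count_rot_head x uc xc.
have : 1 <= size t by rewrite ss; lia.
case: t us {ss} => [|b s] us // _.
case/andP: us => xbs _.
have xb : b != x by apply: contra xbs => /eqP <-; apply: mem_head.
have xl : last b s != x by apply: contra xbs => /eqP <-; apply: mem_last.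
rewrite cycle_count_cons path_mult_cons path_mult_notin //=.
by rewrite /is_edge !orbb eqxx (negbTE xb) (negbTE xl).
Qed.

Section Exchange.
Variable T : eqType.

(* C := [w :: C1] and C' := [d0 :: P1 ++ w :: Q1] are Hamiltonian cycles on
   [V] and D := [d0 :: D1] is a cycle through [sumn M] of its vertices.  The
   identity is stated for the paths obtained by cutting one edge out of each of
   C and D and two out of C'; the [last] equations say that the cut edges agree
   on both sides, so it is equivalent to C + D = C' + cs ([exchange_cycles]). *)
Definition exchange_state (V : seq T) (M : seq nat) (w d0 : T) (C1 D1 P1 Q1 : seq T)
    (cs : seq (seq T)) : Prop :=
  [/\ perm_eq (w :: C1) V, perm_eq (d0 :: P1 ++ w :: Q1) V,
      uniq (d0 :: D1), size (d0 :: D1) = sumn M & {subset d0 :: D1 <= V}] /\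
  [/\ last w C1 = last d0 P1, last w Q1 = last d0 D1,
      all (fun c => uniq c && (2 <= size c)) cs, map size cs = M &
      forall x y, path_mult x y w C1 + path_mult x y d0 D1 =
        path_mult x y d0 P1 + path_mult x y w Q1 + sumn [seq cycle_count x y c | c <- cs]].

Lemma exchange_base (s r : T) (T' V : seq T) :
  uniq (s :: r :: T' ++ V) ->
  exchange_state (s :: r :: T' ++ V) [:: (size T').+2]
    r s (T' ++ s :: V) (r :: T') V T' [:: s :: r :: T'].
Proof.
move=> uV; split; split.
- by apply/permP => p /=; rewrite !count_cat /=; lia.
- by apply/permP => p /=; rewrite !count_cat /=; lia.
- by move: uV; rewrite -2!cat_cons cat_uniq => /andP[].
- by rewrite /= addn0.
- by move=> z; rewrite -2!cat_cons mem_cat => ->.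
- by rewrite last_cat.
- by [].
- by rewrite /= !andbT; move: uV; rewrite -2!cat_cons cat_uniq => /andP[].
- by [].
- by move=> x y; rewrite /= addn0 cycle_count_cons path_mult_cat /=; lia.
Qed.

Lemma exchange_step (s r : T) (T' V : seq T) M w d0 C1 D1 P1 Q1 cs :
  uniq (s :: r :: T' ++ V) -> exchange_state V M w d0 C1 D1 P1 Q1 cs ->
  exchange_state (s :: r :: T' ++ V) ((size T').+2 :: M)
    w s (C1 ++ s :: rev (r :: T')) (r :: T' ++ d0 :: D1)
    (rev (d0 :: P1) ++ rev (r :: T')) Q1 ((s :: r :: T') :: cs).
Proof.
move=> uV [[/permP cC /permP cC' uD sD subD] [eu edl acs mcs hEq]].
move: uV; rewrite -2!cat_cons cat_uniq => /and3P[ub disj uV].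
split; split.
- apply/permP => p; move: (cC p); rewrite /= !count_cat /= count_rev /=; lia.
- apply/permP => p; move: (cC' p); rewrite /= !count_cat /= !count_rev /=; lia.
- rewrite -2!cat_cons cat_uniq ub uD andbT; apply/hasPn => z /subD.
  by apply: (hasPn disj).
- by rewrite /= size_cat -sD.
- by move=> z; rewrite -2!cat_cons !mem_cat => /orP[->|/subD ->] //; rewrite orbT.
- by rewrite !rev_cons !last_cat last_cons !last_rcons.
- by rewrite edl /= last_cat.
- by rewrite /= acs andbT; apply/andP; split.
- by rewrite /= mcs.
- move=> x y; move: (hEq x y).
  rewrite /= !path_mult_cat /= !path_mult_rev last_rev_cons /= cycle_count_cons.
  rewrite path_mult_cons /= eu !(is_edgeC _ _ _ s) (is_edgeC _ _ _ d0); lia.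
Qed.

Lemma exchange_exists (M : seq nat) (V : seq T) :
  M != [::] -> all (fun k => 2 <= k) M -> uniq V -> sumn M <= size V ->
  exists w d0 C1 D1 P1 Q1 cs, exchange_state V M w d0 C1 D1 P1 Q1 cs.
Proof.
elim: M V => [//|k M IH] V _ /andP[hk hM] uV hs.
have [s [r [T' [V' [eV ek]]]]] :
    exists s r T' V', V = s :: r :: T' ++ V' /\ k = (size T').+2.
  have sk : size (take k V) = k by rewrite size_takel //=; move: hs => /=; lia.
  move: (cat_take_drop k V) sk; case: (take k V) => [|s [|r T']] eV sk;
    try by move: hk; rewrite -sk.
  by exists s, r, T', (drop k V).
subst V k; case: M IH hM hs => [|k' M] IH hM hs.
  by do 7 eexists; apply: exchange_base.
have uV' : uniq V' by move: uV; rewrite -2!cat_cons cat_uniq => /and3P[].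
have hs' : sumn (k' :: M) <= size V' by move: hs; rewrite /= size_cat; lia.
have [w [d0 [C1 [D1 [P1 [Q1 [cs st]]]]]]] := IH V' isT hM uV' hs'.
by do 7 eexists; apply: exchange_step st.
Qed.

Lemma exchange_cycles (V : seq T) M w d0 C1 D1 P1 Q1 cs x y :
  exchange_state V M w d0 C1 D1 P1 Q1 cs ->
  cycle_count x y (w :: C1) + cycle_count x y (d0 :: D1) =
  cycle_count x y (d0 :: P1 ++ w :: Q1) + sumn [seq cycle_count x y c | c <- cs].
Proof.
case=> _ [eu edl _ _ /(_ x y) hEq].
rewrite !cycle_count_cons path_mult_cat path_mult_cons last_cat last_cons eu edl; lia.
Qed.

End Exchange.

Lemma cycle_multE n (c : seq 'I_n) x y : cycle_mult c x y = cycle_count x y c.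
Proof. by []. Qed.

Lemma sub_2Kn_cycle_sum n (c1 c2 : seq 'I_n) :
  uniq c1 -> uniq c2 -> 3 <= size c1 -> 3 <= size c2 ->
  sub_2Kn (fun x y => cycle_mult c1 x y + cycle_mult c2 x y).
Proof.
move=> u1 u2 s1 s2; split; [|split] => [x y|x|x y]; rewrite !cycle_multE.
- by rewrite cycle_countC (cycle_countC _ _ c2).
- by rewrite !cycle_count_loop // ltnW.
- have [<-|xy] := eqVneq x y; first by rewrite !cycle_count_loop // ltnW.
  by rewrite -[2]/(1 + 1) leq_add ?cycle_count_le1.
Qed.

Theorem mainTheorem15 (n m : nat) (M : seq nat) :
  3 <= m -> m <= n -> all (fun k => 2 <= k) M -> sumn M = m ->
  exists G : multigraph n,
    sub_2Kn G /\ decomposes_into G (rcons M n) /\ decomposes_into G [:: m; n].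
Proof.
move=> hm hmn hM hsum.
have M0 : M != [::] by apply: contraTneq hm => M0; rewrite -hsum M0.
have hV : sumn M <= size (enum 'I_n) by rewrite size_enum_ord hsum.
have [w [d0 [C1 [D1 [P1 [Q1 [cs st]]]]]]] := exchange_exists M0 hM (enum_uniq 'I_n) hV.
have hcyc x y := exchange_cycles x y st.
case: st => [[pC pC' uD sD _] [_ _ acs mcs _]].
have [uC sC] : uniq (w :: C1) /\ size (w :: C1) = n.
  by rewrite (perm_uniq pC) (perm_size pC) enum_uniq size_enum_ord.
have [uC' sC'] : uniq (d0 :: P1 ++ w :: Q1) /\ size (d0 :: P1 ++ w :: Q1) = n.
  by rewrite (perm_uniq pC') (perm_size pC') enum_uniq size_enum_ord.
rewrite hsum in sD.
exists (fun x y => cycle_mult (d0 :: D1) x y + cycle_mult (w :: C1) x y).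
split; [|split].
- by apply: sub_2Kn_cycle_sum; rewrite // ?sD ?sC //; lia.
- exists (rcons cs (d0 :: P1 ++ w :: Q1)); split; [|split].
  + by rewrite all_rcons acs /is_cycle uC' sC' andbT; lia.
  + by rewrite map_rcons mcs sC'.
  + move=> x y; rewrite map_rcons -cats1 sumn_cat /= addn0 !cycle_multE.
    by rewrite addnC hcyc addnC.
- exists [:: d0 :: D1; w :: C1]; split; [|split].
  + by apply/and3P; split; rewrite /is_cycle ?uD ?uC ?sD ?sC //; lia.
  + by move: sD sC => /= -> ->.
  + by move=> x y /=; rewrite addn0.
Qed.
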